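(* Let $F:\mathbb{R}^n\to\mathbb{H}^{n+1}\subset\mathbb{L}^{n+2}$ be the immersion of a horosphere in the hyperbolic space, with unit normal vector field $N$ and all principal curvatures equal to $\kappa=\pm1$. Then the solution to the mean curvature flow with initial data $F$ is $$\widehat F^t(x)=\cosh(nt)F(x)+\kappa\sinh(nt)N(x),$$ for all $t\in\mathbb{R}$. Moreover, $\widehat F^t(\mathbb{R}^n)$ is a horosphere for all $t\in\mathbb{R}$.
   Context: $\mathbb{H}^{n+1}$ is the hyperboloid model of hyperbolic space in the Lorentzian space $\mathbb{L}^{n+2}$. Second fundamental form $h(v,w)=-\langle dN(v),dF(w)\rangle$, principal curvatures are its eigenvalues, mean curvature $H=\sum_i\kappa_i$. A family $\widehat F:M\times I\to\mathbb{H}^{n+1}$, $0\in I$, solves the mean curvature flow with initial condition $F$ if $\partial_t\widehat F=\widehat H\widehat N$ and $\widehat F(\cdot,0)=F$, where $\widehat N^t$ is a unit normal of $\widehat F^t$ and $\widehat H^t$ the corresponding mean curvature. *)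

From HB Require Import structures.
From mathcomp Require Import all_boot all_order all_algebra.
From mathcomp Require Import all_classical all_reals all_analysis.
Set Implicit Arguments. Unset Strict Implicit. Unset Printing Implicit Defensive.
Import Order.TTheory GRing.Theory Num.Theory.
Import numFieldNormedType.Exports.
Local Open Scope classical_set_scope.
Local Open Scope ring_scope.

Section Defs.
Variable R : realType.

Definition cosh (x : R) : R := (expR x + expR (- x)) / 2.
Definition sinh (x : R) : R := (expR x - expR (- x)) / 2.

(* Lorentzian inner product on L^{m+1} = R^{m+1}, coordinate 0 timelike *)
Definition lor (m : nat) (u v : 'rV[R]_m.+1) : R :=
  - (u ord0 ord0 * v ord0 ord0)
  + \sum_(i < m.+1 | i != ord0) u ord0 i * v ord0 i.

Definition hyperbolic (n : nat) : set 'rV[R]_(n.+2) :=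
  [set x | lor x x = -1 /\ 0 < x ord0 ord0].

Definition horosphere (n : nat) (S : set 'rV[R]_(n.+2)) : Prop :=
  exists v : 'rV[R]_(n.+2),
    lor v v = 0 /\ 0 < v ord0 ord0 /\
    S = [set x | @hyperbolic n x /\ lor x v = -1].

Definition partial (n : nat) (F : 'rV[R]_n -> 'rV[R]_(n.+2)) (x : 'rV[R]_n)
  (i : 'I_n) : 'rV[R]_(n.+2) := 'D_(delta_mx ord0 i) F x.

Definition jac (n : nat) (F : 'rV[R]_n -> 'rV[R]_(n.+2)) (x : 'rV[R]_n)
  : 'M[R]_(n, n.+2) := \matrix_(i < n) partial F x i.

Definition immersion_H (n : nat) (F : 'rV[R]_n -> 'rV[R]_(n.+2)) : Prop :=
  (forall x, differentiable F x) /\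
  (forall x, @hyperbolic n (F x)) /\
  (forall x, row_free (jac F x)).

Definition unit_normal (n : nat) (F N : 'rV[R]_n -> 'rV[R]_(n.+2)) : Prop :=
  (forall x, differentiable N x) /\
  (forall x, lor (N x) (F x) = 0) /\
  (forall x, lor (N x) (N x) = 1) /\
  (forall x i, lor (N x) (partial F x i) = 0).

Definition metric (n : nat) (F : 'rV[R]_n -> 'rV[R]_(n.+2)) (x : 'rV[R]_n)
  : 'M[R]_n := \matrix_(i, j) lor (partial F x i) (partial F x j).

Definition second_ff (n : nat) (F N : 'rV[R]_n -> 'rV[R]_(n.+2))
  (x : 'rV[R]_n) : 'M[R]_n :=
  \matrix_(i, j) - lor (partial N x i) (partial F x j).

Definition principal_curvature (n : nat) (F N : 'rV[R]_n -> 'rV[R]_(n.+2))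
  (x : 'rV[R]_n) (k : R) : Prop :=
  exists2 w : 'rV[R]_n, w != 0 & w *m second_ff F N x = k *: (w *m metric F x).

(* mean curvature: sum of principal curvatures (with multiplicity)
   = trace of the shape operator g^{-1} h *)
Definition mean_curvature (n : nat) (F N : 'rV[R]_n -> 'rV[R]_(n.+2))
  (x : 'rV[R]_n) : R := \tr (invmx (metric F x) *m second_ff F N x).

End Defs.

(* A horosphere is the intersection of the hyperboloid with an affine null
   hyperplane [<x, v> = -1].  Along it [v - F] is a unit normal, and since the
   normal line is one-dimensional the given normal is [N = a (v - F)] with
   [a = +-1]; differentiating shows [dN = -a dF], so [a] is the principal
   curvature and [a = kappa].  Hence
     [cosh (n t) F + kappa sinh (n t) N = exp (- n t) F + sinh (n t) v],
   which is again a horosphere, namely [<x, exp (n t) v> = -1], with unit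
   normal [kappa (exp (n t) v - F^t)], shape operator [kappa Id] and mean
   curvature [n kappa].  Its velocity in [t] is [n (exp (n t) v - F^t)], i.e.
   mean curvature times normal. *)

From HB Require Import structures.
From mathcomp Require Import all_boot all_order all_algebra.
From mathcomp Require Import all_classical all_reals all_analysis.
From mathcomp Require Import ring lra.
Import Order.TTheory GRing.Theory Num.Theory.
Import numFieldNormedType.Exports.
Local Open Scope classical_set_scope.
Local Open Scope ring_scope.
Set Implicit Arguments. Unset Strict Implicit. Unset Printing Implicit Defensive.

Section LorentzForm.
Variables (R : realType) (m : nat).
Implicit Types (u w z : 'rV[R]_m.+1) (a : R).

Definition lor_sign (i : 'I_m.+1) : R := if i == ord0 then -1 else 1.

Lemma lorE u w : lor u w = \sum_i lor_sign i * (u ord0 i * w ord0 i).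
Proof.
rewrite /lor [RHS](bigD1 ord0) //= /lor_sign eqxx mulN1r; congr (_ + _).
by apply: eq_bigr => i /negbTE ->; rewrite mul1r.
Qed.

Lemma lorC u w : lor u w = lor w u.
Proof. by rewrite !lorE; apply: eq_bigr => i _; rewrite [u _ _ * _]mulrC. Qed.

Lemma lorDl u w z : lor (u + w) z = lor u z + lor w z.
Proof.
by rewrite !lorE -big_split; apply: eq_bigr => i _; rewrite !mxE /=; ring.
Qed.

Lemma lorZl a u z : lor (a *: u) z = a * lor u z.
Proof. by rewrite !lorE mulr_sumr; apply: eq_bigr => i _; rewrite !mxE; ring. Qed.

Lemma lorBl u w z : lor (u - w) z = lor u z - lor w z.
Proof. by rewrite lorDl -scaleN1r lorZl mulN1r. Qed.

Lemma lorDr u w z : lor z (u + w) = lor z u + lor z w.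
Proof. by rewrite !(lorC z) lorDl. Qed.

Lemma lorZr a u z : lor z (a *: u) = a * lor z u.
Proof. by rewrite !(lorC z) lorZl. Qed.

Lemma lorBr u w z : lor z (u - w) = lor z u - lor z w.
Proof. by rewrite !(lorC z) lorBl. Qed.

Lemma lor0r z : lor z 0 = 0.
Proof. by rewrite -(scale0r 0) lorZr mul0r. Qed.

Lemma lor_mull p (c : 'rV[R]_p) (A : 'M[R]_(p, m.+1)) z :
  lor (c *m A) z = \sum_k c ord0 k * lor (row k A) z.
Proof.
rewrite lorE; under eq_bigr do rewrite !mxE big_distrl /= big_distrr /=.
rewrite exchange_big /=; apply: eq_bigr => k _.
by rewrite lorE big_distrr /=; apply: eq_bigr => i _; rewrite !mxE; ring.
Qed.

Lemma lor_time0_ge0 u : u ord0 ord0 = 0 -> 0 <= lor u u.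
Proof.
move=> u0; rewrite /lor u0 mul0r oppr0 add0r.
by apply: sumr_ge0 => i _; rewrite -expr2 sqr_ge0.
Qed.

Lemma lor_time0_eq0 u : u ord0 ord0 = 0 -> lor u u = 0 -> u = 0.
Proof.
rewrite /lor => u0; rewrite u0 mul0r oppr0 add0r => /eqP.
rewrite psumr_eq0 => [/allP sq0|i _]; last by rewrite -expr2 sqr_ge0.
apply/rowP => i; rewrite mxE; have [->|i0] := eqVneq i ord0; first exact: u0.
by have := sq0 i (mem_index_enum i); rewrite i0 mulf_eq0 orbb => /eqP.
Qed.

Lemma timelike_time_neq0 u : lor u u = -1 -> u ord0 ord0 != 0.
Proof. by move=> uu; apply/eqP => /lor_time0_ge0; rewrite uu ler0N1. Qed.

(* Subtracting the multiple of [P] with the same time coordinate leaves a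
   vector [w] with zero time coordinate and [lor w w = lor u u - l ^+ 2]. *)
Lemma lor_orth_timelike_eq0 P u :
  lor P P = -1 -> lor u P = 0 -> lor u u = 0 -> u = 0.
Proof.
move=> PP uP uu; have P0 := timelike_time_neq0 PP.
pose l := u ord0 ord0 / P ord0 ord0; pose w := u - l *: P.
have w0 : w ord0 ord0 = 0 by rewrite !mxE /l divfK // subrr.
have ww : lor w w = - l ^+ 2.
  by rewrite !(lorBl, lorBr, lorZl, lorZr) PP uP (lorC P u) uP uu; ring.
have l0 : l = 0.
  by apply/eqP; rewrite -sqrf_eq0 eq_le sqr_ge0 andbT -oppr_ge0 -ww lor_time0_ge0.
by move: (lor_time0_eq0 w0); rewrite ww l0 expr0n oppr0 /w l0 scale0r subr0 => ->.
Qed.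

Lemma lor_null_pair a b P w : lor P P = -1 -> lor P w = -1 -> lor w w = 0 ->
  lor (a *: P + b *: w) (a *: P + b *: w) = - a ^+ 2 - 2 * a * b.
Proof.
move=> PP Pw ww; rewrite !(lorDl, lorDr, lorZl, lorZr) PP Pw (lorC w) Pw ww.
by ring.
Qed.

(* If [z] were past-directed, adding a positive multiple of the future null
   vector [v] to kill its time coordinate would give a timelike vector with
   zero time coordinate. *)
Lemma lor_time_gt0 z v : lor z z = -1 -> lor z v = -1 -> lor v v = 0 ->
  0 < v ord0 ord0 -> 0 < z ord0 ord0.
Proof.
move=> zz zv vv v_gt0; rewrite ltNge; apply/negP => z_le0.
have z_lt0 : z ord0 ord0 < 0 by rewrite lt_neqAle timelike_time_neq0.
pose b := - z ord0 ord0 / v ord0 ord0.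
have b_gt0 : 0 < b by rewrite divr_gt0 // oppr_gt0.
have w0 : (1 *: z + b *: v) ord0 ord0 = 0.
  by rewrite !mxE mul1r divfK ?addrN ?gt_eqF.
by move: (lor_time0_ge0 w0); rewrite lor_null_pair //; lra.
Qed.

Definition lor_dual z : 'rV[R]_m.+1 := \row_i (lor_sign i * z ord0 i).

Lemma mul_lor_dual p (A : 'M[R]_(p, m.+1)) z :
  A *m (lor_dual z)^T = \col_k lor (row k A) z.
Proof.
apply/matrixP => k j; rewrite !mxE lorE.
by apply: eq_bigr => i _; rewrite !mxE; ring.
Qed.

Lemma lor_nondegenerate (M : 'M[R]_m.+1) z :
  M \in unitmx -> (forall k, lor (row k M) z = 0) -> z = 0.
Proof.
move=> Mu Mz; have MX0 : M *m (lor_dual z)^T = 0.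
  by rewrite mul_lor_dual; apply/colP => k; rewrite !mxE Mz.
have : (lor_dual z)^T = 0 by rewrite -(mulKmx Mu (lor_dual z)^T) MX0 mulmx0.
move/(congr1 trmx); rewrite trmxK trmx0 => /rowP dz0.
apply/rowP => i; move: (dz0 i); rewrite !mxE /lor_sign.
by case: (i == ord0); rewrite ?mulN1r ?mul1r // => /eqP; rewrite oppr_eq0 => /eqP.
Qed.

End LorentzForm.

Arguments lor_sign {R m} i.

Section LorentzDerivative.
Variables (R : realType) (m : nat) (V : normedModType R).
Implicit Types P Q : V -> 'rV[R]_m.+1.

Lemma is_derive_coord P x v dP i : is_derive x v P dP ->
  is_derive x v (fun y => P y ord0 i) (dP ord0 i).
Proof.
move=> [dPx <-]; apply: DeriveDef; first exact: (derivable_mxP P x v).1.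
by rewrite derive_mx // mxE.
Qed.

Global Instance is_derive_lor P Q x v dP dQ :
  is_derive x v P dP -> is_derive x v Q dQ ->
  is_derive x v (fun y => lor (P y) (Q y)) (lor dP (Q x) + lor (P x) dQ).
Proof.
move=> dPx dQx.
have -> : (fun y => lor (P y) (Q y)) =
    \sum_(i < m.+1)
      (lor_sign i \*: ((fun y => P y ord0 i) * (fun y => Q y ord0 i))).
  by apply: funext => y; rewrite lorE fct_sumE.
apply: is_derive_eq.
  apply: is_derive_sum => i.
  by apply/is_deriveZ/is_deriveM; exact: is_derive_coord.
by rewrite !lorE -big_split; apply: eq_bigr => i _; rewrite /GRing.scale /=; ring.
Qed.

End LorentzDerivative.

Section Immersion.
Variables (R : realType) (n : nat).
Implicit Types (G : 'rV[R]_n -> 'rV[R]_(n.+2)) (x : 'rV[R]_n).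

Lemma is_derive_partial G x i :
  differentiable G x -> is_derive x (delta_mx ord0 i) G (partial G x i).
Proof. by move=> dG; apply: DeriveDef; first exact: diff_derivable. Qed.

Lemma row_jac G x k : row k (jac G x) = partial G x k.
Proof. by apply/rowP => j; rewrite !mxE. Qed.

Lemma partial_lor_self G c x i : differentiable G x ->
  (forall y, lor (G y) (G y) = c) -> lor (partial G x i) (G x) = 0.
Proof.
move=> dG GGc; have dGi := is_derive_partial i dG.
have dGG := is_derive_lor dGi dGi.
have : 'D_(delta_mx ord0 i) (fun y => lor (G y) (G y)) x = 0.
  by rewrite (_ : (fun y => _) = cst c) ?derive_cst //; apply: funext.
by rewrite derive_val (lorC (G x)) => /eqP; rewrite -mulr2n mulrn_eq0 => /eqP.
Qed.

Lemma partial_lor_cst G w c x i : differentiable G x ->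
  (forall y, lor (G y) w = c) -> lor (partial G x i) w = 0.
Proof.
move=> dG Gwc; have dGi := is_derive_partial i dG.
have dGw := is_derive_lor dGi (is_derive_cst w x (delta_mx ord0 i)).
have : 'D_(delta_mx ord0 i) (fun y => lor (G y) (cst w y)) x = 0.
  by rewrite (_ : (fun y => _) = cst c) ?derive_cst //; apply: funext.
by rewrite derive_val lor0r addr0.
Qed.

Lemma differentiable_affine G a w x : differentiable G x ->
  differentiable (fun y => a *: G y + w) x.
Proof.
move=> dG; have -> : (fun y => a *: G y + w) = a *: G + cst w by [].
by apply: differentiableD; [exact: differentiableZ | exact: differentiable_cst].
Qed.

Lemma partial_affine G a w x i : differentiable G x ->
  partial (fun y => a *: G y + w) x i = a *: partial G x i.
Proof.
move=> dG; have dGi := is_derive_partial i dG.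
have -> : (fun y => a *: G y + w) = a *: G + cst w by [].
rewrite /partial deriveD ?deriveZ ?derive_cst ?addr0 ?derive_val //.
all: by apply: ex_derive.
Qed.

Lemma metric_unit G x : lor (G x) (G x) = -1 ->
  (forall i, lor (partial G x i) (G x) = 0) -> row_free (jac G x) ->
  metric G x \in unitmx.
Proof.
move=> GG dGG jac_free; rewrite -row_free_unit; apply/inj_row_free => c cg0.
have orth_c : lor (c *m jac G x) (G x) = 0.
  by rewrite lor_mull big1 // => k _; rewrite row_jac dGG mulr0.
have null_c : lor (c *m jac G x) (c *m jac G x) = 0.
  rewrite lor_mull big1 // => k _; rewrite lorC lor_mull.
  have := congr1 (fun r : 'rV_n => r ord0 k) cg0; rewrite !mxE => ck0.
  rewrite -[RHS](mulr0 (c ord0 k)) -[in RHS]ck0; congr (_ * _).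
  by apply: eq_bigr => l _; rewrite !row_jac mxE.
apply: (row_free_inj jac_free).
by rewrite (lor_orth_timelike_eq0 GG orth_c null_c) mul0mx.
Qed.

End Immersion.

Section Frame.
Variables (R : realType) (m p : nat).
Variables (P u : 'rV[R]_m.+1) (J : 'M[R]_(p, m.+1)).
Hypotheses (PP : lor P P = -1) (uu : lor u u = 1) (uP : lor u P = 0).
Hypotheses (JP : forall k, lor (row k J) P = 0).
Hypotheses (Ju : forall k, lor (row k J) u = 0).

Lemma row_free_frame : row_free J -> row_free (col_mx (col_mx P u) J).
Proof.
move=> J_free; apply/inj_row_free => c; rewrite -[c]hsubmxK -[lsubmx c]hsubmxK.
set a := lsubmx (lsubmx c); set b := rsubmx (lsubmx c); set d := rsubmx c.
rewrite !mul_row_col (mx11_scalar a) (mx11_scalar b) !mul_scalar_mx => comb0.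
have lor_dJ z : lor (d *m J) z = \sum_k d ord0 k * lor (row k J) z.
  exact: lor_mull.
have := congr1 (fun w => lor w P) comb0; have := congr1 (fun w => lor w u) comb0.
rewrite /= !lorDl !lorZl !lor_dJ !big1 => [| k _ | k _]; rewrite ?JP ?Ju ?mulr0 //.
rewrite PP uu uP (lorC P) uP lorC lor0r (lorC 0) lor0r => b0 a0.
have {}a0 : a 0 0 = 0 by lra.
have {}b0 : b 0 0 = 0 by lra.
move: comb0; rewrite a0 b0 !scale0r !add0r => dJ0.
have -> : d = 0 by apply: (row_free_inj J_free); rewrite dJ0 mul0mx.
by rewrite !raddf0 !row_mx0.
Qed.

End Frame.

Section UnitNormal.
Variables (R : realType) (n : nat).

Lemma lor_orth_frame_eq0 (P u z : 'rV[R]_n.+2) (J : 'M[R]_(n, n.+2)) :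
  lor P P = -1 -> lor u u = 1 -> lor u P = 0 ->
  (forall k, lor (row k J) P = 0) -> (forall k, lor (row k J) u = 0) ->
  row_free J ->
  lor z P = 0 -> lor z u = 0 -> (forall k, lor z (row k J) = 0) -> z = 0.
Proof.
move=> PP uu uP JP Ju J_free zP zu zJ.
pose M : 'M[R]_n.+2 := col_mx (col_mx P u) J.
apply: (@lor_nondegenerate _ _ M); first by rewrite -row_free_unit row_free_frame.
change (forall k : 'I_(1 + 1 + n), lor (row k (col_mx (col_mx P u) J)) z = 0).
move=> k; rewrite lorC -(splitK k).
case: (fintype.split k) => [k'|k'] /=; last by rewrite rowKd.
rewrite rowKu -(splitK k').
by case: (fintype.split k') => j /=; rewrite ?rowKu ?rowKd row_id.
Qed.

Lemma unit_normal_parallel (G N U : 'rV[R]_n -> 'rV[R]_n.+2) x :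
  immersion_H G -> unit_normal G N -> unit_normal G U ->
  N x = lor (N x) (U x) *: U x.
Proof.
move=> [dG [hypG jac_free]] [_ [NG [_ NdG]]] [_ [UG [UU UdG]]].
have GG : lor (G x) (G x) = -1 by case: (hypG x).
apply/eqP; rewrite -subr_eq0; apply/eqP.
apply: (lor_orth_frame_eq0 GG (UU x) (UG x) _ _ (jac_free x)) => [k|k|||k].
- by rewrite row_jac (partial_lor_self _ (dG x) (fun y => proj1 (hypG y))).
- by rewrite row_jac lorC UdG.
- by rewrite lorBl lorZl NG UG mulr0 subr0.
- by rewrite lorBl lorZl UU mulr1 subrr.
- by rewrite row_jac lorBl lorZl NdG UdG mulr0 subr0.
Qed.

End UnitNormal.

Section SecondFF.
Variables (R : realType) (n : nat).
Implicit Types (G N U : 'rV[R]_n -> 'rV[R]_n.+2) (x : 'rV[R]_n).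

Lemma second_ff_parallel_normal G N U x :
  differentiable N x -> differentiable U x ->
  (forall y, N y = lor (N y) (U y) *: U y) ->
  (forall j, lor (U x) (partial G x j) = 0) ->
  second_ff G N x = lor (N x) (U x) *: second_ff G U x.
Proof.
move=> dN dU NU UdG; apply/matrixP => i j; rewrite !mxE.
pose c := partial G x j; pose e := delta_mx ord0 i : 'rV[R]_n.
have dNc := is_derive_lor (is_derive_partial i dN) (is_derive_cst c x e).
have dUc := is_derive_lor (is_derive_partial i dU) (is_derive_cst c x e).
have dNU := is_derive_lor (is_derive_partial i dN) (is_derive_partial i dU).
have Nc_prod : (fun y => lor (N y) (cst c y)) =
    (fun y => lor (N y) (U y)) * (fun y => lor (U y) (cst c y)).
  by apply: funext => y; rewrite /= {1}NU lorZl.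
have := @derive_val _ _ _ _ _ _ _ (is_deriveM dNU dUc).
rewrite -Nc_prod (@derive_val _ _ _ _ _ _ _ dNc) /= !lor0r !addr0 UdG.
rewrite scale0r addr0 => ->.
by rewrite /GRing.scale /= mulrN.
Qed.

End SecondFF.

Section RealDerivative.
Variable R : realType.

Lemma is_derive_scalel (W : normedModType R) (f : R -> R) (A : W) (t df : R) :
  is_derive t 1 f df -> is_derive t 1 (fun s => f s *: A) (df *: A).
Proof.
move=> [/derivable1_diffP df_t <-]; have dfA := differentiableZl A df_t.
apply: DeriveDef; first exact/derivable1_diffP.
by rewrite deriveE // diffZl // -deriveE //; exact/derivable1_diffP.
Qed.

Lemma is_derive_expRM (c t : R) :
  is_derive t 1 (fun s => expR (c * s)) (c * expR (c * t)).
Proof.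
have dc : is_derive t 1 (fun s : R => c * s) c.
  apply: is_derive_eq (is_deriveZ c (is_derive_id t 1)) _.
  by rewrite /GRing.scale /= mulr1.
rewrite mulrC; exact: (is_derive1_comp (f := expR)).
Qed.

End RealDerivative.

Lemma cosh0 (R : realType) : cosh 0 = 1 :> R.
Proof. by rewrite /cosh oppr0 expR0 divff // pnatr_eq0. Qed.

Lemma sinh0 (R : realType) : sinh 0 = 0 :> R.
Proof. by rewrite /sinh oppr0 expR0 subrr mul0r. Qed.

Definition horo_immersion (R : realType) n (G : 'rV[R]_n -> 'rV[R]_n.+2) w :=
  [/\ immersion_H G, lor w w = 0, 0 < w ord0 ord0 &
      range G = [set z | hyperbolic z /\ lor z w = -1]].

(* [cosh theta G + sinh theta (w - G)]: the horosphere at signed distance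
   [theta] from [G] along its unit normal [w - G]. *)
Definition horo_parallel (R : realType) n (G : 'rV[R]_n -> 'rV[R]_n.+2) w
  (theta : R) x := expR (- theta) *: G x + sinh theta *: w.

Section Horosphere.
Variables (R : realType) (n : nat).
Variables (G : 'rV[R]_n -> 'rV[R]_n.+2) (w : 'rV[R]_n.+2).
Hypothesis horoG : horo_immersion G w.

Lemma horo_differentiable x : differentiable G x.
Proof. by case: horoG => -[]. Qed.

Lemma horo_lor_self x : lor (G x) (G x) = -1.
Proof. by case: horoG => -[_ [/(_ x) []]]. Qed.

Lemma horo_lor_null x : lor (G x) w = -1.
Proof.
case: horoG => _ _ _ rangeG; have : range G (G x) by exists x.
by rewrite rangeG => -[].
Qed.

Lemma horo_normal_affine (k : R) :
  (fun x => k *: (w - G x)) = (fun x => (- k) *: G x + k *: w).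
Proof. by apply: funext => x; rewrite scalerBr addrC scaleNr. Qed.

Lemma partial_horo_normal (k : R) x i :
  partial (fun y => k *: (w - G y)) x i = (- k) *: partial G x i.
Proof.
by rewrite horo_normal_affine partial_affine //; exact: horo_differentiable.
Qed.

Lemma horo_unit_normal (k : R) : k * k = 1 ->
  unit_normal G (fun x => k *: (w - G x)).
Proof.
case: horoG => _ ww _ _ kk; split; [|split; [|split]] => [x|x|x|x i].
- rewrite horo_normal_affine; apply: differentiable_affine.
  exact: horo_differentiable.
- by rewrite lorZl lorBl lorC horo_lor_null horo_lor_self subrr mulr0.
- rewrite lorZl lorZr !(lorBl, lorBr) ww (lorC w) horo_lor_null horo_lor_self.
  by rewrite mulrA kk; ring.
- rewrite lorZl lorBl (lorC w) (lorC (G x)).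
  have dG := horo_differentiable x.
  rewrite (partial_lor_cst _ dG horo_lor_null) (partial_lor_self _ dG horo_lor_self).
  by rewrite subrr mulr0.
Qed.

Lemma horo_second_ff (k : R) x :
  second_ff G (fun y => k *: (w - G y)) x = k *: metric G x.
Proof.
by apply/matrixP => i j; rewrite !mxE partial_horo_normal lorZl mulNr opprK.
Qed.

Lemma horo_mean_curvature (k : R) x :
  mean_curvature G (fun y => k *: (w - G y)) x = k * n%:R.
Proof.
case: horoG => -[_ [_ jac_free]] _ _ _.
have metric_inv : metric G x \in unitmx.
  apply: metric_unit (horo_lor_self x) _ (jac_free x) => i.
  exact: (partial_lor_self _ (horo_differentiable x) horo_lor_self).
by rewrite /mean_curvature horo_second_ff -scalemxAr mulVmx // mxtraceZ mxtrace1.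
Qed.

Lemma horo_parallelE theta x : horo_parallel G w theta x =
  (expR theta)^-1 *: G x + ((expR theta - (expR theta)^-1) / 2) *: w.
Proof. by rewrite /horo_parallel /sinh expRN. Qed.

Lemma horo_parallel_mem theta x :
  hyperbolic (horo_parallel G w theta x) /\
  lor (horo_parallel G w theta x) (expR theta *: w) = -1.
Proof.
case: horoG => _ ww w_gt0 _; have E_gt0 := expR_gt0 theta.
have E0 : expR theta != 0 by rewrite gt_eqF.
have self : lor (horo_parallel G w theta x) (horo_parallel G w theta x) = -1.
  by rewrite horo_parallelE lor_null_pair ?horo_lor_self ?horo_lor_null //; field.
have null : lor (horo_parallel G w theta x) (expR theta *: w) = -1.
  by rewrite horo_parallelE lorZr lorDl !lorZl horo_lor_null ww; field.
split=> //; split=> //; apply: (lor_time_gt0 self null).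
- by rewrite lorZl lorZr ww !mulr0.
- by rewrite mxE mulr_gt0.
Qed.

Lemma range_horo_parallel theta :
  range (horo_parallel G w theta) =
  [set z | hyperbolic z /\ lor z (expR theta *: w) = -1].
Proof.
apply/seteqP; split=> [_ [x _ <-]|z [[zz _] zw]]; first exact: horo_parallel_mem.
case: horoG => _ ww w_gt0 rangeG; have E_gt0 := expR_gt0 theta.
have E0 : expR theta != 0 by rewrite gt_eqF.
have {}zw : lor z w = - (expR theta)^-1.
  by apply: (mulfI E0); rewrite -lorZr zw mulrN divff.
pose y := expR theta *: (z - sinh theta *: w).
have yw : lor y w = -1 by rewrite lorZl lorBl lorZl ww zw /sinh expRN; field.
have yy : lor y y = -1.
  rewrite lorZl lorZr !(lorBl, lorBr, lorZl, lorZr) zz ww (lorC w) zw /sinh expRN.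
  by field.
have [x _ Gx] : range G y.
  by rewrite rangeG; split=> //; split=> //; exact: lor_time_gt0 yy yw ww w_gt0.
exists x => //.
by rewrite /horo_parallel Gx /y scalerA -expRD addNr expR0 scale1r subrK.
Qed.

Lemma horo_immersion_parallel theta :
  horo_immersion (horo_parallel G w theta) (expR theta *: w).
Proof.
case: horoG => -[_ [_ jac_free]] ww w_gt0 _.
have E0 : expR (- theta) != 0 by rewrite gt_eqF ?expR_gt0.
split; last exact: range_horo_parallel.
- split; [|split] => x.
  + by apply: differentiable_affine; exact: horo_differentiable.
  + exact: (horo_parallel_mem theta x).1.
  have -> : jac (horo_parallel G w theta) x = expR (- theta) *: jac G x.
    apply/matrixP => i j; rewrite !mxE partial_affine ?mxE //.
    exact: horo_differentiable.
  by rewrite /row_free mxrank_scale_nz //; exact: jac_free.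
- by rewrite lorZl lorZr ww !mulr0.
- by rewrite mxE mulr_gt0 ?expR_gt0.
Qed.

End Horosphere.

Section HoroParallelFamily.
Variables (R : realType) (n : nat).
Variables (G : 'rV[R]_n -> 'rV[R]_n.+2) (w : 'rV[R]_n.+2).

Lemma horo_parallel0 x : horo_parallel G w 0 x = G x.
Proof. by rewrite /horo_parallel oppr0 expR0 scale1r sinh0 scale0r addr0. Qed.

Lemma cosh_sinh_horo_parallel (k theta : R) x : k * k = 1 ->
  cosh theta *: G x + (k * sinh theta) *: (k *: (w - G x)) =
  horo_parallel G w theta x.
Proof.
move=> kk; rewrite scalerA mulrAC kk mul1r.
by apply/rowP => j; rewrite !mxE /horo_parallel /cosh /sinh; field.
Qed.

Lemma is_derive_horo_parallel (c t : R) x :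
  is_derive t 1 (fun s => horo_parallel G w (c * s) x)
    (c *: (expR (c * t) *: w - horo_parallel G w (c * t) x)).
Proof.
have -> : (fun s => horo_parallel G w (c * s) x) =
    (fun s => expR (- c * s) *: G x) +
    ((fun s => expR (c * s) *: (2^-1 *: w)) -
     (fun s => expR (- c * s) *: (2^-1 *: w))).
  apply: funext => s; apply/rowP => j.
  by rewrite /horo_parallel /sinh !mxE /= mulNr; field.
have dexp (a : R) (A : 'rV[R]_n.+2) := is_derive_scalel A (is_derive_expRM a t).
apply: is_derive_eq (is_deriveD (dexp _ _) (is_deriveB (dexp _ _) (dexp _ _))) _.
by apply/rowP => j; rewrite /horo_parallel /sinh !mxE !mulNr; field.
Qed.

End HoroParallelFamily.

Lemma horo_normal_principal_curvature (R : realType) n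
    (F N : 'rV[R]_n -> 'rV[R]_n.+2) v (kappa : R) :
  (0 < n)%N -> horo_immersion F v -> unit_normal F N ->
  (forall x k, principal_curvature F N x k -> k = kappa) ->
  forall x, N x = kappa *: (v - F x).
Proof.
move=> n_gt0 horoF normalN curv x.
have normalU := horo_unit_normal horoF (mulr1 1).
set U := fun y => 1 *: (v - F y) in normalU.
have NU y : N y = lor (N y) (U y) *: U y.
  by case: horoF => immF _ _ _; exact: unit_normal_parallel immF normalN normalU.
have sffN : second_ff F N x = lor (N x) (U x) *: metric F x.
  case: normalN normalU => [dN _] [dU [_ [_ UdF]]].
  by rewrite (second_ff_parallel_normal (dN x) (dU x) NU) ?horo_second_ff ?scale1r.
have -> : kappa = lor (N x) (U x).
  apply/esym/(curv x); exists (delta_mx 0 (Ordinal n_gt0)).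
    apply/eqP => /matrixP /(_ 0 (Ordinal n_gt0)); rewrite !mxE !eqxx.
    exact/eqP/oner_neq0.
  by rewrite sffN -scalemxAr.
by rewrite {1}NU /U scale1r.
Qed.

Unset Implicit Arguments.

Theorem proposition2 (R : realType) (n : nat)
  (F N : 'rV[R]_n -> 'rV[R]_(n.+2)) (kappa : R) :
  immersion_H F ->
  horosphere (range F) ->
  unit_normal F N ->
  (kappa = 1 \/ kappa = -1) ->
  (forall x k, principal_curvature F N x k -> k = kappa) ->
  let Fh := fun (x : 'rV[R]_n) (t : R) =>
    cosh (n%:R * t) *: F x + (kappa * sinh (n%:R * t)) *: N x in
  (forall x, Fh x 0 = F x) /\
  exists Nh : 'rV[R]_n -> R -> 'rV[R]_(n.+2),
    forall t : R,
      immersion_H (fun x => Fh x t) /\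
      unit_normal (fun x => Fh x t) (fun x => Nh x t) /\
      (forall x, derivable (Fh x) t 1 /\
         derive1 (Fh x) t = mean_curvature (fun y => Fh y t) (fun y => Nh y t) x
                         *: Nh x t) /\
      horosphere (range (fun x => Fh x t)).
Proof.
move=> immF [v [vv [v_gt0 rangeF]]] normalN kappa_pm1 curv Fh.
have horoF : horo_immersion F v by [].
have kk : kappa * kappa = 1 by case: kappa_pm1 => ->; rewrite ?mulrNN mulr1.
have FhE x t : Fh x t = horo_parallel F v (n%:R * t) x.
  have [n0|n_gt0] := posnP n.
    have nt0 : n%:R * t = 0 by rewrite n0 mul0r.
    by rewrite /Fh nt0 horo_parallel0 cosh0 sinh0 mulr0 scale0r scale1r addr0.
  rewrite /Fh (horo_normal_principal_curvature n_gt0 horoF normalN curv).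
  exact: cosh_sinh_horo_parallel.
split=> [x|]; first by rewrite FhE mulr0 horo_parallel0.
exists (fun x t => kappa *: (expR (n%:R * t) *: v - Fh x t)) => t.
have [immFt ww_t w_t_gt0 rangeFt] := horo_immersion_parallel horoF (n%:R * t).
rewrite (_ : (fun x => Fh x t) = horo_parallel F v (n%:R * t)); last exact: funext.
under [fun x => kappa *: _]eq_fun do rewrite FhE.
split=> //; split; first exact: horo_unit_normal.
split=> [x|]; last by exists (expR (n%:R * t) *: v).
have dFh : is_derive t 1 (Fh x) (n%:R *: (expR (n%:R * t) *: v - Fh x t)).
  rewrite (_ : Fh x = fun s => horo_parallel F v (n%:R * s) x); last exact: funext.
  exact: is_derive_horo_parallel.
split; first exact: ex_derive.
by rewrite derive1E derive_val horo_mean_curvature // scalerA mulrAC kk mul1r FhE.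
Qed.
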